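(* Let $K\ge 2$ and $\Theta=\{(\theta_1,\ldots,\theta_K):\sum_k\theta_k=1,\ \theta_k\ge0\}$. Consider Dempster's Simplex-DSM posterior for a multinomial sample of size $n=1$ with observation $X=1$: its random focal elements are $$\mathbf e(Z)=\Big\{\theta\in\Theta:\ \frac{Z_1}{\theta_1}\le\frac{Z_j}{\theta_j},\ j=2,\ldots,K\Big\},\qquad Z_1,\ldots,Z_K\stackrel{iid}{\sim}\mathrm{Expo}(1)$$ (with the convention $z/0=+\infty$ for $z>0$). Fix a value $t=(t_2,\ldots,t_K)$ of $\theta_{-1}\equiv(\theta_2,\ldots,\theta_K)/(1-\theta_1)$ in the $(K-2)$-simplex. Then the conditional DSM for $\theta_1$ given $\theta_{-1}=t$ (obtained by intersecting each focal element with $\{\theta\in\Theta:\theta_{-1}=t\}$, conditioning on non-empty intersection, and projecting onto the $\theta_1$-coordinate) has random intervals of the form $[U,1)$ with $U\sim\mathrm{Unif}[0,1)$.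
   Context: A Dempster–Shafer model (DSM) here is a random set (focal element) in the parameter space; conditioning a DSM on an event means intersecting the random set with that event and restricting to (i.e. conditioning the underlying randomness on) non-empty intersections; the ''Simplex-DSM'' is the model defined by the displayed random sets. *)

From HB Require Import structures.
From mathcomp Require Import all_boot all_order all_algebra.
From mathcomp Require Import all_classical all_reals all_analysis.
Set Implicit Arguments. Unset Strict Implicit. Unset Printing Implicit Defensive.
Import Order.TTheory GRing.Theory Num.Theory.
Local Open Scope classical_set_scope.
Local Open Scope ring_scope.

(* The simplex Theta in R^K, K = k.+2, coordinates indexed by 'I_K;
   theta_1 is the coordinate ord0. *)
Definition simplex (n : nat) (R : realType) : set ('I_n -> R) :=
  [set th | (forall i, 0 <= th i) /\ \sum_(i < n) th i = 1].

Definition ediv (R : realType) (z th : R) : \bar R :=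
  if th == 0 then +oo%E else (z / th)%:E.

Definition focal (k : nat) (R : realType) (z : 'I_k.+2 -> R) : set ('I_k.+2 -> R) :=
  [set th | simplex th /\
     forall j : 'I_k.+2, j != ord0 -> (ediv (z ord0) (th ord0) <= ediv (z j) (th j))%E].

Definition theta_m1 (k : nat) (R : realType) (th : 'I_k.+2 -> R) : 'I_k.+1 -> R :=
  fun j => th (lift ord0 j) / (1 - th ord0).

Definition slice (k : nat) (R : realType) (t : 'I_k.+1 -> R) : set ('I_k.+2 -> R) :=
  [set th | simplex th /\ th ord0 < 1 /\ theta_m1 th = t].

Definition cond_focal (k : nat) (R : realType) (t : 'I_k.+1 -> R)
  (z : 'I_k.+2 -> R) : set R :=
  (fun th : 'I_k.+2 -> R => th ord0) @` (focal z `&` slice t).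

Definition mutually_independent d (T : measurableType d) (R : realType)
  (P : probability T R) (n : nat) (Z : 'I_n -> {RV P >-> R}) : Prop :=
  forall B : 'I_n -> set R, (forall i, measurable (B i)) ->
    P (\bigcap_(i in [set: 'I_n]) (Z i @^-1` B i)) = (\prod_(i < n) P (Z i @^-1` B i))%E.

(* For z > 0 the slice of the focal element e(z) at theta_{-1} = t is the
   segment theta = (s, (1 - s) t) cut out by z_1 t_j (1 - s) <= z_(j+1) s for
   the j with t_j > 0, i.e. s in [U, 1) with
   U = max_j z_1 t_j / (z_(j+1) + z_1 t_j).  For 0 < x <= 1, U < x iff
   c z_1 < Y with c = (1 - x) / x and Y = min_(t_j > 0) z_(j+1) / t_j.  Since
   Y ~ Expo(sum_j t_j) = Expo(1) is independent of Z_1,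
   P(U < x) = P(c Z_1 < Y) = 1 / (1 + c) = x. *)

From mathcomp Require Import all_boot all_order all_algebra.
From mathcomp Require Import all_classical all_reals all_analysis.
From mathcomp Require Import ring.
From mathcomp Require Import measurable_realfun.
Import Order.TTheory GRing.Theory Num.Theory.
Import numFieldTopology.Exports.
Local Open Scope classical_set_scope.
Local Open Scope ring_scope.
Set Implicit Arguments. Unset Strict Implicit. Unset Printing Implicit Defensive.

Lemma simplex_ge0 n (R : realType) (t : 'I_n -> R) : simplex t -> forall j, 0 <= t j.
Proof. by case. Qed.

Lemma simplex_has_pos n (R : realType) (t : 'I_n -> R) : simplex t -> exists j, 0 < t j.
Proof.
move=> ht; apply/not_existsP => tpos; case: ht => t0 /eqP; apply/negP.
rewrite big1 ?(oner_neq0 R) 1?eq_sym //= => j _.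
by apply/eqP; rewrite eq_le t0 andbT leNgt; apply/negP.
Qed.

Lemma ediv_pos_le (R : realType) (a b c d : R) : 0 < b -> 0 < d ->
  (ediv a b <= ediv c d)%E = (a * d <= c * b).
Proof.
by move=> b0 d0; rewrite /ediv !gt_eqF // lee_fin ler_pdivrMr // mulrAC ler_pdivlMr.
Qed.

Section slice_geometry.
Variables (k : nat) (R : realType) (t : 'I_k.+1 -> R).
Hypothesis ht : simplex t.

Definition slice_point (s : R) : 'I_k.+2 -> R := fun i =>
  if unlift ord0 i is Some j then t j * (1 - s) else s.

Lemma slice_point0 s : slice_point s ord0 = s.
Proof. by rewrite /slice_point unlift_none. Qed.

Lemma slice_pointS s j : slice_point s (lift ord0 j) = t j * (1 - s).
Proof. by rewrite /slice_point liftK. Qed.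

Lemma slice_point_simplex s : 0 <= s <= 1 -> simplex (slice_point s).
Proof.
case/andP=> s0 s1; split.
  move=> i; rewrite /slice_point; case: unliftP => [j _|_] //.
  by rewrite mulr_ge0 ?simplex_ge0 ?subr_ge0.
rewrite big_ord_recl slice_point0; under eq_bigr do rewrite slice_pointS.
by rewrite -big_distrl /= (proj2 ht) mul1r addrC subrK.
Qed.

Section constraints.
Variable z : 'I_k.+2 -> R.

Definition focal_num j := z ord0 * t j.
Definition focal_den j := z (lift ord0 j) + z ord0 * t j.

Definition feasible s :=
  0 < s < 1 /\ forall j, 0 < t j -> focal_num j <= s * focal_den j.

Lemma focal_cstrE s j : (z ord0 * t j * (1 - s) <= z (lift ord0 j) * s) =
  (focal_num j <= s * focal_den j).
Proof.
by rewrite -subr_ge0 -[RHS]subr_ge0 /focal_num /focal_den; congr (0 <= _); ring.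
Qed.

Lemma cond_focal_feasible s : cond_focal t z s -> feasible s.
Proof.
case=> th [[_ th_focal] [[th_ge0 _] [th1_lt1 th_slice]]] <-.
have lift_neq0 j : lift ord0 j != ord0 :> 'I_k.+2 by rewrite eq_sym neq_lift.
have th1c_gt0 : 0 < 1 - th ord0 by rewrite subr_gt0.
have thS j : th (lift ord0 j) = t j * (1 - th ord0).
  by rewrite -th_slice /theta_m1 divfK // gt_eqF.
have thS_gt0 j : 0 < t j -> 0 < th (lift ord0 j) by move=> tj; rewrite thS mulr_gt0.
have th1_gt0 : 0 < th ord0.
  rewrite lt_neqAle th_ge0 andbT; apply/negP => /eqP th10.
  have [j tj] := simplex_has_pos ht.
  have := th_focal _ (lift_neq0 j); rewrite /ediv -th10 eqxx.
  by rewrite gt_eqF ?thS_gt0 //= leye_eq.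
split; first by rewrite th1_gt0.
move=> j tj; rewrite -focal_cstrE.
by have := th_focal _ (lift_neq0 j); rewrite ediv_pos_le ?thS_gt0 // thS mulrA.
Qed.

Lemma feasible_cond_focal s : feasible s -> cond_focal t z s.
Proof.
case=> /andP[s0 s1] s_feas; exists (slice_point s); last exact: slice_point0.
have s1c_gt0 : 0 < 1 - s by rewrite subr_gt0.
have s_simplex : simplex (slice_point s) by apply: slice_point_simplex; rewrite !ltW.
split; split => //.
- move=> i; case: (unliftP ord0 i) => [j ->|->]; last by rewrite eqxx.
  move=> _; rewrite slice_pointS slice_point0.
  have [tj0|tj_neq0] := eqVneq (t j) 0; first by rewrite /ediv tj0 mul0r eqxx leey.
  have tj : 0 < t j by rewrite lt_neqAle eq_sym tj_neq0 simplex_ge0.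
  by rewrite ediv_pos_le ?mulr_gt0 // mulrA focal_cstrE s_feas.
- rewrite slice_point0; split => //.
  by apply/funext => j; rewrite /theta_m1 slice_pointS slice_point0 mulfK ?gt_eqF.
Qed.

Lemma cond_focalP s : cond_focal t z s <-> feasible s.
Proof. by split; [exact: cond_focal_feasible|exact: feasible_cond_focal]. Qed.

Definition lower_bound j :=
  if (0 < t j) && (0 < focal_den j) then focal_num j / focal_den j else 0.
Definition upper_bound j :=
  if (0 < t j) && (focal_den j < 0) then focal_num j / focal_den j else 1.
Definition focal_inf := \big[Order.max/0]_j lower_bound j.
Definition focal_sup := \big[Order.min/1]_j upper_bound j.
(* Feasible values of s lie between focal_inf and focal_sup, with
   0 < focal_sup <= 1; if there are any, this point is one of them. *)
Definition focal_witness := Order.max focal_inf (focal_sup / 2).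

Lemma focal_inf_le s : feasible s -> focal_inf <= s.
Proof.
case=> /andP[s0 _] s_feas; apply/bigmax_leP; split; first exact: ltW.
move=> j _; rewrite /lower_bound; case: ifPn => [/andP[tj den0]|_]; last exact: ltW.
by rewrite ler_pdivrMr // s_feas.
Qed.

Lemma feasible_witness : (exists s, feasible s) -> feasible focal_witness.
Proof.
case=> s s_feas; have [/andP[s0 s1] s_cstr] := s_feas.
have inf_s : focal_inf <= s := focal_inf_le s_feas.
have s_sup : s <= focal_sup.
  apply/bigmin_geP; split; first exact: ltW.
  move=> j _; rewrite /upper_bound; case: ifPn => [/andP[tj den0]|_]; last exact: ltW.
  by rewrite ler_ndivlMr // s_cstr.
have sup_le1 : focal_sup <= 1 by rewrite /focal_sup bigmin_idl ge_min lexx.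
have sup_gt0 : 0 < focal_sup := lt_le_trans s0 s_sup.
have half_sup : focal_sup / 2 < focal_sup by rewrite ltr_pdivrMr // ltr_pMr // ltr1n.
split.
  rewrite lt_max divr_gt0 // orbT gt_max (le_lt_trans inf_s s1) /=.
  exact: lt_le_trans half_sup sup_le1.
move=> j tj; have [den_lt0|den_gt0|den0] := ltgtP (focal_den j) 0.
- have : focal_witness <= upper_bound j.
    rewrite ge_max (le_trans inf_s (le_trans s_sup (bigmin_le _ _ _))) /=.
    exact/ltW/(lt_le_trans half_sup (bigmin_le _ _ _)).
  by rewrite /upper_bound tj den_lt0 /= ler_ndivlMr.
- have : lower_bound j <= focal_witness.
    by rewrite le_max (le_bigmax _ _ j).
  by rewrite /lower_bound tj den_gt0 /= ler_pdivrMr.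
- by have := s_cstr j tj; rewrite den0 !mulr0.
Qed.

Hypothesis z_gt0 : forall i, 0 < z i.

Lemma focal_den_gt0 j : 0 < t j -> 0 < focal_den j.
Proof. by move=> tj; rewrite addr_gt0 ?mulr_gt0. Qed.

Lemma focal_inf_gt0 : 0 < focal_inf.
Proof.
have [j tj] := simplex_has_pos ht; apply: (lt_le_trans _ (le_bigmax _ _ j)).
by rewrite /lower_bound tj focal_den_gt0 //= divr_gt0 ?focal_den_gt0 ?mulr_gt0.
Qed.

Lemma focal_inf_lt1 : focal_inf < 1.
Proof.
apply/bigmax_ltP; split => // j _; rewrite /lower_bound.
case: ifPn => [/andP[tj den0]|_] //.
by rewrite ltr_pdivrMr // mul1r ltrDr.
Qed.

Lemma cond_focal_pos : cond_focal t z = `[focal_inf, 1[%classic.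
Proof.
apply/seteqP; split => s.
  move=> /cond_focalP s_feas /=; rewrite in_itv /= focal_inf_le //.
  by case: s_feas => /andP[].
rewrite /= in_itv /= => /andP[inf_s s1]; apply/cond_focalP; split.
  by rewrite s1 (lt_le_trans focal_inf_gt0 inf_s).
move=> j tj; have := le_trans (le_bigmax 0 lower_bound j) inf_s.
by rewrite /lower_bound tj focal_den_gt0 //= ler_pdivrMr // focal_den_gt0.
Qed.

Lemma focal_inf_lt x : 0 < x -> focal_inf < x <->
  forall j, 0 < t j -> (1 - x) / x * z ord0 < z (lift ord0 j) / t j.
Proof.
move=> x0.
have bound_lt j : 0 < t j ->
    (focal_num j / focal_den j < x) = ((1 - x) / x * z ord0 < z (lift ord0 j) / t j).
  move=> tj; have den0 := focal_den_gt0 tj.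
  rewrite ltr_pdivrMr // ltr_pdivlMr //.
  have -> : (1 - x) / x * z ord0 * t j = (1 - x) * z ord0 * t j / x.
    by field; rewrite gt_eqF.
  rewrite ltr_pdivrMr //.
  by rewrite -subr_gt0 -[RHS]subr_gt0 /focal_num /focal_den; congr (0 < _); ring.
split.
  move/bigmax_ltP => [_ inf_lt] j tj.
  by have := inf_lt j isT; rewrite /lower_bound tj focal_den_gt0 //= bound_lt.
move=> cstr; apply/bigmax_ltP; split => // j _.
by rewrite /lower_bound; case: ifPn => [/andP[tj _]|//]; rewrite bound_lt ?cstr.
Qed.

End constraints.
End slice_geometry.

Lemma measurable_invr (R : realType) : measurable_fun [set: R] (@GRing.inv R).
Proof.
have nz_open : open (~` [set (0 : R)]).
  by rewrite openC; apply/accessible_closed_set1/hausdorff_accessible/Rhausdorff.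
rewrite -(setvU [set 0]); apply/measurable_funU => //; first exact: measurableC.
split.
  apply: open_continuous_measurable_fun => // x.
  by rewrite inE /= => /eqP x0; exact: inv_continuous.
move=> _ B mB; have [B0|B0] := pselect (B (0 : R)^-1).
  by rewrite (_ : _ `&` _ = [set 0]) //; apply/seteqP; split => [x [->]|x ->].
by rewrite (_ : _ `&` _ = set0) //; apply/seteqP; split => [x [/= ->]|].
Qed.

Section measurable_real_functions.
Context d (T : measurableType d) (R : realType).
Implicit Types f g : T -> R.

Lemma measurable_divr f g : measurable_fun setT f -> measurable_fun setT g ->
  measurable_fun setT (fun w => f w / g w).
Proof.
move=> mf mg; apply: measurable_funM => //.
exact: measurableT_comp (@measurable_invr R) mg.
Qed.

Lemma measurable_bigmaxr (I : Type) (s : seq I) (P : pred I) (x0 : T -> R)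
    (F : I -> T -> R) : measurable_fun setT x0 ->
  (forall i, measurable_fun setT (F i)) ->
  measurable_fun setT (fun w => \big[Order.max/x0 w]_(i <- s | P i) F i w).
Proof.
move=> m0 mF; elim: s => [|i s IH]; first by under eq_fun do rewrite big_nil.
under eq_fun do rewrite big_cons.
by case: (P i) => //; exact: measurable_maxr.
Qed.

Lemma measurable_bigminr (I : Type) (s : seq I) (P : pred I) (x0 : T -> R)
    (F : I -> T -> R) : measurable_fun setT x0 ->
  (forall i, measurable_fun setT (F i)) ->
  measurable_fun setT (fun w => \big[Order.min/x0 w]_(i <- s | P i) F i w).
Proof.
move=> m0 mF; elim: s => [|i s IH]; first by under eq_fun do rewrite big_nil.
under eq_fun do rewrite big_cons.
by case: (P i) => //; exact: measurable_minr.
Qed.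

Lemma measurable_set_ler f g : measurable_fun setT f -> measurable_fun setT g ->
  measurable [set w | f w <= g w].
Proof.
move=> mf mg; rewrite -[X in measurable X]setTI.
by apply: (measurable_fun_ler mf mg) => //; exact: measurable_set1.
Qed.

Lemma measurable_set_ltr f g : measurable_fun setT f -> measurable_fun setT g ->
  measurable [set w | f w < g w].
Proof.
move=> mf mg; rewrite -[X in measurable X]setTI.
by apply: (measurable_fun_ltr mf mg) => //; exact: measurable_set1.
Qed.

End measurable_real_functions.

Definition expo1 (R : realType) : probability (measurableTypeR R) R.
Proof. refine (exponential_prob (1 : R) : probability _ R); exact: ltr01. Defined.

Section exponential1.
Variable R : realType.
Local Notation mu := (@lebesgue_measure R).
Local Notation Ex := (expo1 R).

Lemma expo1E A : Ex A = (\int[mu]_(x in A) (exponential_pdf 1 x)%:E)%E.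
Proof. by []. Qed.

Lemma expo1_itvcy (a : R) : 0 <= a -> Ex `[a, +oo[%classic = (expR (- a))%:E.
Proof.
have expN_cont : continuous (fun z : R^o => expR (- 1 * z)).
  move=> z; apply: continuous_comp; last exact: continuous_expR.
  by apply: continuousM => //; apply: (@continuousN _ R^o); exact: cst_continuous.
move=> a0; rewrite expo1E.
rewrite (@ge0_continuous_FTC2y _ _ (fun x => - expR (- 1 * x)) _ 0).
- by rewrite sub0e EFinN oppeK mulN1r.
- by move=> x _; apply: exponential_pdf_ge0.
- apply: (@continuous_subspaceW R^o _ _ [set` `[0, +oo[%R]).
    by apply: subset_itvr; rewrite bnd_simp.
  exact: within_continuous_exponential_pdf.
- rewrite -oppr0; apply: cvgN.
  under eq_fun do rewrite mulN1r.
  exact: cvgr_expR.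
- by move=> x _; exact: ex_derive.
- by apply: cvgN; apply/cvg_at_right_filter; exact: expN_cont.
- move=> x; rewrite in_itv /= andbT => ax.
  by apply: derive1_exponential_pdf; rewrite in_itv /= andbT (le_lt_trans a0).
Qed.

Lemma expo1_itvoy (a : R) :
  Ex `]a, +oo[%classic = (if 0 <= a then expR (- a) else 1)%:E.
Proof.
have [a0|a0] := leP 0 a.
  rewrite -expo1_itvcy // !expo1E integral_itv_obnd_cbnd //.
  by apply/measurable_EFinP/measurable_funTS; exact: measurable_exponential_pdf.
apply/eqP; rewrite eq_le probability_le1 //=.
have <- : Ex `[0, +oo[%classic = 1%E by rewrite expo1_itvcy // oppr0 expR0.
by apply: le_measure; rewrite ?inE //; apply: subset_itvr; rewrite bnd_simp.
Qed.

Lemma expo1_dominates : Ex `<< mu.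
Proof.
apply/null_content_dominatesP => A mA muA0; rewrite expo1E.
apply: null_set_integral => //.
by apply/measurable_EFinP/measurable_funTS; exact: measurable_exponential_pdf.
Qed.

Lemma integral_expo1 f U : measurable U -> measurable_fun U f ->
  (\int[Ex]_(x in U) `|f x| < +oo)%E ->
  (\int[Ex]_(x in U) f x = \int[mu]_(x in U) (f x * (exponential_pdf 1 x)%:E))%E.
Proof.
move=> mU mf finf.
rewrite -(Radon_Nikodym_change_of_variables expo1_dominates) //=; last first.
  by apply/integrableP; split.
apply: ae_eq_integral => //.
- apply: emeasurable_funM => //; apply: (measurable_int mu).
  apply: (integrableS _ _ (@subsetT _ _)) => //=.
  exact/Radon_Nikodym_integrable/expo1_dominates.
- apply: emeasurable_funM => //=; apply/measurableT_comp => //=.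
  by apply/measurable_funTS; exact: measurable_exponential_pdf.
- apply: ae_eqe_mul2l => /=.
  rewrite Radon_NikodymE //=; first exact: expo1_dominates.
  move=> abmu; case: cid => /= h [h1 h2 h3].
  apply: integral_ae_eq => //=.
  + exact: integrableS h2.
  + by apply/measurable_funTS/measurableT_comp => //; exact: measurable_exponential_pdf.
  + by move=> E E01 mE; rewrite -h3.
Qed.
End exponential1.

Section expo1_product.
Variable R : realType.
Local Notation MR := (measurableTypeR R).
Local Notation mu := (@lebesgue_measure R).
Local Notation Ex := (expo1 R).

Definition expo1_tail (c x : R) : \bar R :=
  (if 0 <= c * x then expR (- (c * x)) else 1)%:E.

Lemma measurable_expo1_tail c : measurable_fun [set: MR] (expo1_tail c).
Proof.
apply/measurable_EFinP; apply: measurable_fun_ifT => //.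
- by apply: measurable_fun_ler => //; exact: mulrl_measurable.
- apply: measurableT_comp; first exact: measurable_expR.
  by apply: measurableT_comp; [exact: oppr_measurable|exact: mulrl_measurable].
Qed.

Lemma expo1_tail_ge0 c x : (0 <= expo1_tail c x)%E.
Proof. by rewrite /expo1_tail lee_fin; case: ifP => // _; exact: expR_ge0. Qed.

Lemma expo1_tail_le1 c x : (expo1_tail c x <= 1)%E.
Proof. by rewrite /expo1_tail lee_fin; case: ifPn => // cx; rewrite expR_le1 oppr_le0. Qed.

Lemma expo1_prod_ltr (c : R) : 0 <= c ->
  (Ex \x Ex)%E [set p : MR * MR | c * p.1 < p.2] = ((1 + c)^-1)%:E.
Proof.
move=> c0; have c1 : 0 < 1 + c by rewrite ltr_wpDr.
rewrite -[LHS]/(\int[Ex]_x Ex (xsection [set p : MR * MR | (c * p.1 < p.2)%R] x))%E.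
have section_tail x :
    Ex (xsection [set p : MR * MR | c * p.1 < p.2] x) = expo1_tail c x.
  rewrite /expo1_tail -expo1_itvoy; congr (Ex _).
  by apply/seteqP; split => y; rewrite /xsection /= inE /= in_itv /= andbT.
under eq_integral do rewrite section_tail.
rewrite integral_expo1 //; last 2 first.
- exact: measurable_expo1_tail.
- apply: (@le_lt_trans _ _ (\int[Ex]_(x in [set: MR]) (cst 1%E x))%E).
    apply: ge0_le_integral => //.
    + by apply: measurableT_comp => //; exact: measurable_expo1_tail.
    + by move=> x _; rewrite gee0_abs ?expo1_tail_ge0 ?expo1_tail_le1.
  by rewrite integral_cst // mul1e (le_lt_trans (probability_le1 Ex measurableT)) ?ltry.
transitivity (\int[mu]_x ((1 + c)^-1%:E * (exponential_pdf (1 + c) x)%:E))%E.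
  apply: eq_integral => x _; have [x0|x0] := leP 0 x.
    rewrite /expo1_tail mulr_ge0 // !exponential_pdfE // -!EFinM; congr (_%:E).
    by rewrite mul1r mulKf ?gt_eqF // -expRD; congr expR; ring.
  by rewrite !lt0_exponential_pdf // !mule0.
rewrite integralZl //; last exact: integrable_exponential_pdf.
by rewrite integral_exponential_pdf // mule1.
Qed.
End expo1_product.

Lemma exists_natr_gt (R : archiRealDomainType) (y : R) : exists n : nat, y < n%:R.
Proof.
exists (Num.Def.archi_bound `|y|); apply: (le_lt_trans (ler_norm y)).
exact: archi_boundP.
Qed.

Section oy_rectangles.
Variable R : realType.
Local Notation MR := (measurableTypeR R).

Definition oy_rectangles : set (set (MR * MR)) :=
  [set C | exists A y, measurable A /\ C = A `*` `]y, +oo[%classic].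

Local Notation S := (g_sigma_algebraType oy_rectangles).

Lemma oy_rectangles_setX_setT (A : set MR) : measurable A ->
  @measurable _ S (A `*` [set: MR]).
Proof.
move=> mA.
have -> : A `*` [set: MR] = \bigcup_n (A `*` `]- (n%:R), +oo[%classic).
  apply/seteqP; split => [[x y] [/= Ax _]|[x y] [n _ [/= Ax _]]] //.
  have [n yn] := exists_natr_gt (- y).
  by exists n => //; split => //=; rewrite in_itv /= andbT ltrNl.
apply: bigcupT_measurable => n; apply: sub_sigma_algebra.
by exists A, (- n%:R).
Qed.

Lemma measurable_oy_rectangles : @measurable _ (MR * MR)%type = <<s oy_rectangles >>.
Proof.
apply/seteqP; split; last first.
  apply: smallest_sub; first exact: sigma_algebra_measurable.
  by move=> _ [A [y [mA ->]]]; apply: measurableX.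
rewrite measurable_prod_measurableType.
apply: smallest_sub; first exact: smallest_sigma_algebra.
move=> _ [A mA] [B mB] <-.
pose SA := [set B : set MR | @measurable _ S (A `*` B)].
suff : <<s @RGenOInfty.G R >> `<=` SA by apply; move: mB; rewrite RGenOInfty.measurableE.
apply: smallest_sub.
  split.
  - by rewrite /SA /= setX0; exact: (@measurable0 _ S).
  - move=> X SX; rewrite /SA /= setTD.
    have -> : A `*` ~` X = ~` ((~` A) `*` [set: MR] `|` A `*` X).
      apply/seteqP; split => [[x y] [/= Ax nX]|[x y] /= H].
        by move=> [[/= nA _]|[/= _ Xy]].
      have Ax : A x by apply: contrapT => nA; apply: H; left.
      by split => // Xy; apply: H; right.
    apply: (@measurableC _ S); apply: (@measurableU _ S) => //.
    by apply: oy_rectangles_setX_setT; exact: measurableC.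
  - by move=> F SF; rewrite /SA /= setX_bigcupr; exact: (@bigcupT_measurable _ S).
by move=> _ [y ->]; apply: sub_sigma_algebra; exists A, y.
Qed.
End oy_rectangles.

Lemma uniform01_itvNyo (R : realType) (x : R) :
  uniform_prob (@ltr01 R) (`]-oo, x[%classic : set (measurableTypeR R)) =
  (if x <= 0 then 0 else if x <= 1 then x else 1)%:E.
Proof.
rewrite /uniform_prob integral_uniform_pdf.
have uniformE (A : set R) : measurable A -> A `<=` `[0, 1]%classic ->
    (\int[lebesgue_measure]_(y in A) (uniform_pdf 0 1 y)%:E = lebesgue_measure A)%E.
  move=> mA sA; rewrite -[RHS]mul1e -integral_cst //.
  apply: eq_integral => y /[!inE] Ay; rewrite /uniform_pdf.
  by have := sA _ Ay; rewrite /= in_itv /= => ->; rewrite subr0 invr1.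
have [x0|x0] := leP x 0.
  rewrite (_ : _ `&` _ = set0) ?integral_set0 //.
  apply/seteqP; split => y // []; rewrite /= !in_itv /= => yx /andP[y0 _].
  by have := lt_le_trans (le_lt_trans y0 yx) x0; rewrite ltxx.
have [x1|x1] := leP x 1.
  rewrite (_ : _ `&` _ = `[0, x[%classic); last first.
    apply/seteqP; split => y; rewrite /= !in_itv /=; first by case=> yx /andP[-> _].
    by case/andP => -> yx; split => //; rewrite (ltW (lt_le_trans yx x1)).
  rewrite uniformE //; first by rewrite lebesgue_measure_itv /= lte_fin x0 sube0.
  by apply: subset_itvl; rewrite bnd_simp.
rewrite (_ : _ `&` _ = `[0, 1]%classic); last first.
  apply/seteqP; split => y; rewrite /= !in_itv /=; first by case.
  by move=> /andP[y0 y1]; split; [exact: le_lt_trans y1 x1|rewrite y0 y1].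
by rewrite uniformE // lebesgue_measure_itv /= lte_fin ltr01 sube0.
Qed.

Section simplex_dsm.
Context d (T : measurableType d) (R : realType) (P : probability T R) (k : nat).
Variable Z : 'I_k.+2 -> {RV P >-> R}.
Hypothesis Zind : mutually_independent Z.
Hypothesis Zexp : forall i A, measurable A -> distribution P (Z i) A = exponential_prob 1 A.
Variable t : 'I_k.+1 -> R.
Hypothesis ht : simplex t.
Local Notation MR := (measurableTypeR R).
Local Notation Ex := (expo1 R).

Definition sample (w : T) : 'I_k.+2 -> R := fun i => Z i w.

Lemma prob_Z_preimage i (A : set R) : measurable A -> P (Z i @^-1` A) = Ex A.
Proof. by move=> mA; rewrite -[LHS]/(distribution P (Z i) A) Zexp. Qed.

Definition pos_event := \bigcap_(i in [set: 'I_k.+2]) (Z i @^-1` `]0, +oo[%classic).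

Lemma measurable_pos_event : measurable pos_event.
Proof.
apply: fin_bigcap_measurable; first exact: finite_finset.
by move=> i _; apply: measurable_funPTI; exact: measurable_itv.
Qed.

Lemma pos_eventP w : pos_event w -> forall i, 0 < sample w i.
Proof. by move=> posw i; have := posw i I; rewrite /= in_itv /= andbT. Qed.

Lemma prob_pos_event : P pos_event = 1%E.
Proof.
rewrite /pos_event (@Zind (fun=> `]0, +oo[%classic)); last by move=> _; exact: measurable_itv.
rewrite big1 // => i _.
by rewrite prob_Z_preimage ?expo1_itvoy ?lexx ?oppr0 ?expR0 //; exact: measurable_itv.
Qed.

Lemma prob_setC_pos_event : P (~` pos_event) = 0%E.
Proof. by have := probability_setC P measurable_pos_event; rewrite prob_pos_event subee. Qed.

Lemma prob_setI_pos_event (A : set T) : measurable A -> P A = P (A `&` pos_event).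
Proof.
move=> mA; have mAC := measurableI _ _ mA (measurableC measurable_pos_event).
rewrite -{1}(setIT A) -(setUv pos_event) setIUr measureU0 //.
- exact: measurableI mA measurable_pos_event.
- apply: (subset_measure0 mAC (measurableC measurable_pos_event) _
    prob_setC_pos_event).
  by move=> w [].
Qed.

Lemma prob_eq_on_pos_event (A B : set T) : measurable A -> measurable B ->
  A `&` pos_event = B `&` pos_event -> P A = P B.
Proof. by move=> mA mB AB; rewrite prob_setI_pos_event // AB -prob_setI_pos_event. Qed.

Lemma measurable_focal_num j : measurable_fun setT (fun w => focal_num t (sample w) j).
Proof. by apply: measurable_funM => //; exact: measurable_funP. Qed.

Lemma measurable_focal_den j : measurable_fun setT (fun w => focal_den t (sample w) j).
Proof. by apply: measurable_funD; [exact: measurable_funP|exact: measurable_focal_num]. Qed.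

Lemma measurable_lower_bound j :
  measurable_fun setT (fun w => lower_bound t (sample w) j).
Proof.
rewrite /lower_bound; case: (0 < t j) => /=; last exact: measurable_cst.
apply: measurable_fun_ifT => //.
  exact: measurable_fun_ltr (measurable_focal_den j).
exact: measurable_divr (measurable_focal_num j) (measurable_focal_den j).
Qed.

Lemma measurable_upper_bound j :
  measurable_fun setT (fun w => upper_bound t (sample w) j).
Proof.
rewrite /upper_bound; case: (0 < t j) => /=; last exact: measurable_cst.
apply: measurable_fun_ifT => //.
  exact: measurable_fun_ltr (measurable_focal_den j) _.
exact: measurable_divr (measurable_focal_num j) (measurable_focal_den j).
Qed.

Lemma measurable_focal_inf : measurable_fun setT (fun w => focal_inf t (sample w)).
Proof. exact: measurable_bigmaxr measurable_lower_bound. Qed.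

Definition focal_inf_rv : {RV P >-> R} := mfun_Sub (mem_set measurable_focal_inf).

Lemma measurable_focal_witness :
  measurable_fun setT (fun w => focal_witness t (sample w)).
Proof.
apply: measurable_maxr; first exact: measurable_focal_inf.
apply: measurable_funM => //.
exact: measurable_bigminr measurable_upper_bound.
Qed.

Definition focal_nonempty := [set w | cond_focal t (sample w) !=set0].

Lemma focal_nonemptyE :
  focal_nonempty = [set w | feasible t (sample w) (focal_witness t (sample w))].
Proof.
apply/seteqP; split => w /=.
  by case=> s /(cond_focalP ht) s_feas; apply: feasible_witness; exists s.
by move=> w_feas; exists (focal_witness t (sample w)); apply/(cond_focalP ht).
Qed.

Lemma measurable_focal_nonempty : measurable focal_nonempty.
Proof.
pose s w := focal_witness t (sample w).
rewrite focal_nonemptyE.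
have -> : [set w | feasible t (sample w) (s w)] =
    [set w | 0 < s w] `&` [set w | s w < 1] `&` \bigcap_(j in [set j | 0 < t j])
      [set w | focal_num t (sample w) j <= s w * focal_den t (sample w) j].
  apply/seteqP; split => w /=; first by case=> /andP[s0 s1] cstr.
  by case=> -[s0 s1] cstr; split => //; rewrite s0 s1.
apply: measurableI; first apply: measurableI.
- exact: measurable_set_ltr (measurable_cst _) measurable_focal_witness.
- exact: measurable_set_ltr measurable_focal_witness (measurable_cst _).
- apply: fin_bigcap_measurable; first exact: finite_finset.
  move=> j _; apply: measurable_set_ler; first exact: measurable_focal_num.
  by apply: measurable_funM; [exact: measurable_focal_witness|exact: measurable_focal_den].
Qed.

Lemma pos_event_cond_focal w : pos_event w ->
  cond_focal t (sample w) = `[focal_inf t (sample w), 1[%classic.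
Proof. by move/pos_eventP; exact: cond_focal_pos. Qed.

Lemma pos_event_sub_focal_nonempty : pos_event `<=` focal_nonempty.
Proof.
move=> w posw; exists (focal_inf t (sample w)).
by rewrite pos_event_cond_focal //= in_itv /= lexx focal_inf_lt1 //; exact: pos_eventP.
Qed.

Lemma prob_focal_nonempty : P focal_nonempty = 1%E.
Proof.
apply/eqP; rewrite eq_le (probability_le1 P measurable_focal_nonempty) /=.
rewrite -prob_pos_event; apply: le_measure; rewrite ?inE.
- exact: measurable_pos_event.
- exact: measurable_focal_nonempty.
- exact: pos_event_sub_focal_nonempty.
Qed.

Lemma ae_cond_focal : {ae P, forall w, focal_nonempty w ->
  cond_focal t (sample w) = `[focal_inf_rv w, 1[%classic}.
Proof.
exists (~` pos_event); split.
- exact: measurableC measurable_pos_event.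
- exact: prob_setC_pos_event.
- by move=> w /= not_eq posw; apply: not_eq => _; exact: pos_event_cond_focal.
Qed.

Variable j0 : 'I_k.+1.
Hypothesis tj0 : 0 < t j0.

(* Distributed as Expo(sum_j t j) = Expo(1) and independent of [Z ord0];
   the index [j0] only seeds the minimum. *)
Definition scaled_min w := \big[Order.min/Z (lift ord0 j0) w / t j0]_(j | 0 < t j)
  (Z (lift ord0 j) w / t j).

Lemma scaled_min_gtP y w :
  y < scaled_min w <-> forall j, 0 < t j -> y < Z (lift ord0 j) w / t j.
Proof.
split; first by move/bigmin_gtP => [].
by move=> y_lt; apply/bigmin_gtP; split => //; apply: y_lt.
Qed.

Lemma measurable_scaled_min : measurable_fun setT scaled_min.
Proof.
apply: measurable_bigminr => [|j]; apply: measurable_funM => //; exact: measurable_funP.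
Qed.

Lemma measurable_first_and_scaled_min :
  measurable_fun setT (fun w => (Z ord0 w, scaled_min w) : MR * MR).
Proof. exact: measurable_fun_pair (measurable_funP (Z ord0)) measurable_scaled_min. Qed.

Definition first_and_scaled_min : {mfun T >-> (MR * MR)%type} :=
  mfun_Sub (mem_set measurable_first_and_scaled_min).

Local Notation law := (distribution P first_and_scaled_min).

Definition rectangle_events (A : set R) (y : R) (i : 'I_k.+2) : set R :=
  if unlift ord0 i is Some j then
    if 0 < t j then `]y * t j, +oo[%classic else setT
  else A.

Lemma first_and_scaled_min_rectE (A : set MR) y :
  first_and_scaled_min @^-1` (A `*` `]y, +oo[%classic) =
  \bigcap_(i in [set: 'I_k.+2]) (Z i @^-1` rectangle_events A y i).
Proof.
apply/seteqP; split => w /=.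
  rewrite in_itv /= andbT => -[Aw /scaled_min_gtP y_lt] i _ /=.
  rewrite /rectangle_events; case: unliftP => [j ->|->] //.
  case: ifPn => // tj; rewrite /= in_itv /= andbT.
  by rewrite -ltr_pdivlMr //; apply: y_lt.
move=> in_rect; split; first by have := in_rect ord0 I; rewrite /rectangle_events unlift_none.
rewrite /= in_itv /= andbT; apply/scaled_min_gtP => j tj.
have := in_rect (lift ord0 j) I; rewrite /= /rectangle_events liftK tj /= in_itv /= andbT.
by rewrite ltr_pdivlMr.
Qed.

Lemma prob_rectangle_event (A : set R) y j :
  P (Z (lift ord0 j) @^-1` rectangle_events A y (lift ord0 j)) =
  (if 0 <= y then expR (- (y * t j)) else 1)%:E.
Proof.
rewrite /rectangle_events liftK; case: ifPn => tj.
  by rewrite prob_Z_preimage ?expo1_itvoy ?pmulr_lge0 //; exact: measurable_itv.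
have -> : t j = 0 by apply/eqP; rewrite eq_le simplex_ge0 // andbT leNgt.
by rewrite preimage_setT probability_setT mulr0 oppr0 expR0; case: ifP.
Qed.

Lemma law_oy_rectangle (A : set MR) y : measurable A ->
  law (A `*` `]y, +oo[%classic) = (Ex A * Ex `]y, +oo[%classic)%E.
Proof.
move=> mA; rewrite -[LHS]/(P _) first_and_scaled_min_rectE Zind; last first.
  move=> i; rewrite /rectangle_events; case: unliftP => [j _|_] //.
  by case: ifPn => _ //; exact: measurable_itv.
rewrite big_ord_recl /= {1}/rectangle_events unlift_none prob_Z_preimage //.
congr (_ * _)%E; under eq_bigr do rewrite prob_rectangle_event.
rewrite expo1_itvoy; case: ifPn => y0; last by rewrite big1.
rewrite prodEFin -expR_sum; congr (expR _)%:E.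
by rewrite sumrN -mulr_sumr (proj2 ht) mulr1.
Qed.

Lemma law_first_and_scaled_min (X : set (MR * MR)) : measurable X ->
  law X = (Ex \x Ex)%E X.
Proof.
move=> mX.
apply: (measure_unique (@oy_rectangles R)
  (fun n : nat => [set: MR] `*` `]- (n%:R), +oo[%classic)) mX.
- exact: measurable_oy_rectangles.
- move=> _ _ [A [y [mA ->]]] [A' [y' [mA' ->]]].
  exists (A `&` A'), (Num.max y y'); split; first exact: measurableI.
  rewrite -setXI; congr (_ `*` _); apply/seteqP; split => x /=.
    by rewrite !in_itv /= !andbT gt_max => -[-> ->].
  by rewrite !in_itv /= !andbT gt_max => /andP[-> ->].
- by move=> n; exists setT, (- n%:R).
- apply/seteqP; split => // -[x y] _.
  have [n yn] := exists_natr_gt (- y).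
  by exists n => //; split => //=; rewrite in_itv /= andbT ltrNl.
- move=> _ [A [y [mA ->]]]; apply: etrans (law_oy_rectangle y mA) _.
  by apply/esym/product_measure1E => //; exact: measurable_itv.
- move=> n; apply: le_lt_trans (probability_le1 _ _) (ltry _).
  by apply: measurableX => //; exact: measurable_itv.
Qed.

Lemma focal_inf_lt_event x : 0 < x ->
  focal_inf_rv @^-1` `]-oo, x[%classic `&` pos_event =
  first_and_scaled_min @^-1` [set p | (1 - x) / x * p.1 < p.2] `&` pos_event.
Proof.
move=> x0; apply/seteqP; split => w [w_lt posw]; split => //=.
  move: w_lt; rewrite /= in_itv /= => /(focal_inf_lt t (pos_eventP posw) x0) cstr.
  exact/scaled_min_gtP.
by rewrite in_itv /=; apply/(focal_inf_lt t (pos_eventP posw) x0)/scaled_min_gtP.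
Qed.

Lemma prob_focal_inf_ltr x :
  P (focal_inf_rv @^-1` `]-oo, x[%classic) =
  (if x <= 0 then 0 else if x <= 1 then x else 1)%:E.
Proof.
have m_lt : measurable (focal_inf_rv @^-1` `]-oo, x[%classic).
  by apply: measurable_funPTI; exact: measurable_itv.
rewrite prob_setI_pos_event //.
have [x0|x0] := leP x 0.
  rewrite (_ : _ `&` _ = set0) ?measure0 //; apply/seteqP; split => w //=.
  rewrite in_itv /= => -[inf_lt /pos_eventP z_gt0].
  by have := lt_le_trans (lt_trans (focal_inf_gt0 ht z_gt0) inf_lt) x0; rewrite ltxx.
have [x1|x1] := leP x 1; last first.
  rewrite (_ : _ `&` _ = pos_event) ?prob_pos_event //.
  apply/seteqP; split => [w []//|w posw]; split => //=; rewrite in_itv /=.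
  exact: lt_trans (focal_inf_lt1 t (pos_eventP posw)) x1.
have c0 : 0 <= (1 - x) / x by rewrite divr_ge0 ?subr_ge0 // ltW.
have m_cmp : measurable [set p : MR * MR | (1 - x) / x * p.1 < p.2].
  apply: measurable_set_ltr; last exact: measurable_snd.
  by apply: measurable_funM => //; exact: measurable_fst.
rewrite focal_inf_lt_event // -prob_setI_pos_event; last exact: measurable_funPTI.
rewrite [LHS]law_first_and_scaled_min // expo1_prod_ltr //; congr (_%:E).
by field; rewrite gt_eqF // addrC subrK oner_neq0.
Qed.

Lemma prob_focal_inf_preimage (B : set R) : measurable B ->
  P (focal_inf_rv @^-1` B) = uniform_prob (@ltr01 R) B.
Proof.
(* The generators of RGenInftyO live on measurableTypeR R, a measurable
   structure on R distinct from the one of the random variables. *)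
move=> mB.
have m_inf : measurable_fun [set: T] (focal_inf_rv : T -> MR) by exact: measurable_focal_inf.
rewrite -[LHS]/(distribution P (@mfun_Sub _ _ T MR _ (mem_set m_inf)) B).
apply: (@measure_unique _ R MR (@RGenInftyO.G R) (fun n : nat => `]-oo, n%:R[%classic)) mB.
- exact: RGenInftyO.measurableE.
- move=> _ _ [a ->] [b ->]; exists (Num.min a b).
  apply/seteqP; split => x /=; rewrite !in_itv /= lt_min; first by case=> -> ->.
  by case/andP => -> ->.
- by move=> n; exists n%:R.
- apply/seteqP; split => // x _; have [n xn] := exists_natr_gt x.
  by exists n => //=; rewrite in_itv.
- by move=> _ [x ->]; exact: etrans (prob_focal_inf_ltr x) (esym (uniform01_itvNyo x)).
- move=> n; apply: le_lt_trans (probability_le1 _ _) (ltry _).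
  exact: measurable_itv.
Qed.

Lemma prob_focal_nonempty_preimage (B : set R) : measurable B ->
  P (focal_nonempty `&` focal_inf_rv @^-1` B) =
  (P focal_nonempty * uniform_prob (@ltr01 R) B)%E.
Proof.
move=> mB; have m_pre : measurable (focal_inf_rv @^-1` B).
  exact: measurable_funPTI.
rewrite prob_focal_nonempty mul1e -prob_focal_inf_preimage //.
apply: prob_eq_on_pos_event => //; first exact: measurableI measurable_focal_nonempty m_pre.
apply/seteqP; split => w; first by case=> -[].
by case=> pre posw; split => //; split => //; exact: pos_event_sub_focal_nonempty.
Qed.

End simplex_dsm.

Theorem theorem2 (k : nat) (R : realType) (d : measure_display)
  (T : measurableType d) (P : probability T R)
  (Z : 'I_k.+2 -> {RV P >-> R})
  (Zind : mutually_independent Z)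
  (Zexp : forall i A, measurable A -> distribution P (Z i) A = exponential_prob 1 A)
  (t : 'I_k.+1 -> R) (ht : simplex t) :
  let N := [set w | cond_focal t (fun i => Z i w) !=set0] in
  exists U : {RV P >-> R},
    [/\ measurable N,
        (0 < P N)%E,
        {ae P, forall w, N w -> cond_focal t (fun i => Z i w) = `[U w, 1[%classic}
      & forall B, measurable B ->
          P (N `&` U @^-1` B) = (P N * uniform_prob (@ltr01 R) B)%E].
Proof.
have [j0 tj0] := simplex_has_pos ht.
exists (focal_inf_rv Z t); split.
- exact: measurable_focal_nonempty.
- by rewrite (prob_focal_nonempty Zind Zexp ht).
- exact (ae_cond_focal Zind Zexp ht).
- exact (prob_focal_nonempty_preimage Zind Zexp ht tj0).
Qed.
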